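(* Let $p$ be a prime and let $\mathcal{A}$ be an $S$-ring over a cyclic $p$-group $G$ with $\mathrm{rad}(\mathcal{A})>e$. Then there exists an $\mathcal{A}$-section $U/L$ such that $\mathcal{A}$ is the proper $U/L$-wreath product and $\mathrm{rad}(\mathcal{A}_U)=e$.
   Context: Let $G$ be a finite group with identity $e$; for $X\subseteq G$ write $\underline{X}=\sum_{x\in X}x\in\mathbb{Z}G$. An $S$-ring over $G$ is a subring $\mathcal{A}\subseteq\mathbb{Z}G$ for which there is a partition $\mathcal{S}(\mathcal{A})$ of $G$ (the basic sets) with $\{e\}\in\mathcal{S}(\mathcal{A})$, $X^{-1}\in\mathcal{S}(\mathcal{A})$ whenever $X\in\mathcal{S}(\mathcal{A})$, and $\mathcal{A}=\mathrm{Span}_{\mathbb{Z}}\{\underline{X}:X\in\mathcal{S}(\mathcal{A})\}$. $X\subseteq G$ is an $\mathcal{A}$-set if $\underline X\in\mathcal{A}$; an $\mathcal{A}$-subgroup is a subgroup that is an $\mathcal{A}$-set; an $\mathcal{A}$-section is $U/L$ with $L\trianglelefteq U\leq G$ both $\mathcal{A}$-subgroups; $\mathcal{A}_U=\mathrm{Span}_{\mathbb{Z}}\{\underline X:X\in\mathcal{S}(\mathcal{A}),X\subseteq U\}$ is an $S$-ring over $U$. For $X\subseteq G$, $\mathrm{rad}(X)=\{g\in G:Xg=gX=X\}$. For an $S$-ring $\mathcal{B}$ over a cyclic group $H$, $\mathrm{rad}(\mathcal{B})=\mathrm{rad}(X)$ where $X$ is any basic set of $\mathcal{B}$ containing a generator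 of $H$ (this does not depend on the choice of $X$). $\mathcal{A}$ is the $U/L$-wreath product if $L\trianglelefteq G$ and $L\leq\mathrm{rad}(X)$ for every basic set $X\not\subseteq U$; it is proper if $L\neq\{e\}$ and $U\neq G$. *)

From mathcomp Require Import all_boot all_fingroup all_solvable.
Set Implicit Arguments. Unset Strict Implicit. Unset Printing Implicit Defensive.
Local Open Scope group_scope.

Section SRing.
Variable gT : finGroupType.

(* An S-ring over G, given by its family S of basic sets:
   S partitions G, {e} is basic, S is closed under inversion, and the
   Z-span of the basic quantities is closed under multiplication, i.e. for
   basic X, Y the coefficient of z in X*Y (in ZG) is constant on every basic set. *)
Definition is_sring (G : {group gT}) (S : {set {set gT}}) : Prop :=
  [/\ partition S G,
      [set 1] \in S,
      (forall X, X \in S -> X^-1 \in S) &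
      (forall X Y Z, X \in S -> Y \in S -> Z \in S ->
         forall z1 z2, z1 \in Z -> z2 \in Z ->
           #|[set u in setX X Y | u.1 * u.2 == z1]|
           = #|[set u in setX X Y | u.1 * u.2 == z2]|)].

(* X is an A-set: X is a subset of G which is a union of basic sets
   (equivalently its indicator element lies in A). *)
Definition is_aset (G : {group gT}) (S : {set {set gT}}) (X : {set gT}) : bool :=
  (X \subset G) && [forall Y in S, (Y :&: X != set0) ==> (Y \subset X)].

Definition is_asubgroup (G : {group gT}) (S : {set {set gT}}) (H : {group gT}) : bool :=
  (H \subset G) && is_aset G S H.

Definition restr_sring (S : {set {set gT}}) (U : {set gT}) : {set {set gT}} :=
  [set X in S | X \subset U].

Definition rad (G : {set gT}) (X : {set gT}) : {set gT} :=
  [set g in G | (X :* g == X) && (g *: X == X)].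

(* rad of an S-ring over a cyclic group G: rad of the basic set containing
   a (chosen) generator of G; independent of the choice by the paper. *)
Definition sring_rad (G : {group gT}) (S : {set {set gT}}) : {set gT} :=
  let g := odflt 1 [pick x in G | generator G x] in
  rad G (pblock S g).

Definition is_wreath (G : {group gT}) (S : {set {set gT}}) (U L : {group gT}) : bool :=
  (L <| G) && [forall X in S, ~~ (X \subset U) ==> (L \subset rad G X)].

Definition is_proper_wreath (G : {group gT}) (S : {set {set gT}}) (U L : {group gT}) : bool :=
  [&& is_wreath G S U L, L != 1 :> {set gT} & U != G :> {set gT}].

Definition is_asection (G : {group gT}) (S : {set {set gT}}) (U L : {group gT}) : bool :=
  [&& is_asubgroup G S U, is_asubgroup G S L & L <| U].

End SRing.

From mathcomp Require Import all_boot all_fingroup all_solvable.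
Set Implicit Arguments. Unset Strict Implicit. Unset Printing Implicit Defensive.
Local Open Scope group_scope.

(* Schur's theorem on multipliers, proved with Frobenius' congruence for the
   q-fold products of a basic set, shows that the basic sets of two generators
   x and x ^+ m of the same cyclic subgroup are images of each other under the
   power map z |-> z ^+ m.  Hence they have the same radical, and rad(A) is the
   radical of the basic set of any generator of G.
   Let L be the least nontrivial A-subgroup (it contains the subgroup of order
   p of the cyclic p-group G) and U the subgroup generated by the basic sets
   whose radical does not contain L; A is the U/L-wreath product by
   construction.  The generating set of U contains a generator t of U, and L
   is not contained in the radical of the basic set X of t.  If U were G, then
   rad(A) = rad(X) would be a nontrivial A-subgroup not containing L; and
   rad(A_U) = U :&: rad(X) is an A-subgroup not containing L, hence trivial. *)

Lemma rcons_eq_cons (T : Type) (s : seq T) x :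
  rcons s x = x :: s -> s = nseq (size s) x.
Proof. by elim: s => //= y s IHs [-> /IHs {1}->]. Qed.

Section RotateTuple.
Variable T : eqType.

Definition rot1_tuple n (t : n.-tuple T) : n.-tuple T := [tuple of seq.rot 1 t].

Lemma rot1_tuple_inj n : injective (@rot1_tuple n).
Proof. by move=> t1 t2 /(congr1 val) /rot_inj /val_inj. Qed.

Lemma iter_rot1_tuple n (t : n.-tuple T) : iter n (@rot1_tuple n) t = t.
Proof.
suff iter_rot k : k <= n -> val (iter k (@rot1_tuple n) t) = seq.rot k t.
  by apply: val_inj; rewrite iter_rot // rot_oversize ?size_tuple.
elim: k => [|k IHk] lt_k; first by rewrite seq.rot0.
by rewrite iterS /= IHk ?(ltnW lt_k) // (@rotS _ k t) ?size_tuple.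
Qed.

Lemma rot1_tupleP n (t : n.+1.-tuple T) :
  reflect (exists x, t = nseq_tuple n.+1 x) (rot1_tuple t == t).
Proof.
apply: (iffP eqP) => [/(congr1 val) | [x ->]]; last first.
  by apply: val_inj; rewrite /= rot1_cons -cats1 -[[:: x]]/(nseq 1 x) -nseqD addn1.
case: t => -[//|x s] sz_s /=; rewrite rot1_cons => rot_xs; exists x; apply: val_inj.
by rewrite /= (rcons_eq_cons rot_xs); move/eqP: (sz_s) => [->].
Qed.

End RotateTuple.

Section ProductTuples.
Variable gT : finGroupType.
Implicit Types (X : {set gT}) (z : gT).

Definition prod_tuples k X z :=
  [set t : k.-tuple gT | all (mem X) t & \prod_(x <- t) x == z].

Lemma card_prod_tuples0 X z : #|prod_tuples 0 X z| = (z == 1).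
Proof.
have -> : prod_tuples 0 X z = if z == 1 then setT else set0.
  apply/setP => t; rewrite (tuple0 t) !inE big_nil /=.
  by case: (z =P 1) => [->|/eqP nz]; rewrite inE ?eqxx // eq_sym (negbTE nz).
by case: (z == 1); rewrite ?cardsT ?cards0 ?card_tuple.
Qed.

Lemma card_prod_tuplesS k X z :
  #|prod_tuples k.+1 X z| = \sum_(y in X) #|prod_tuples k X (y^-1 * z)|.
Proof.
under eq_bigr do rewrite -sum1_card.
rewrite pair_big_dep -sum1_card.
rewrite (reindex (fun u : gT * k.-tuple gT => [tuple of u.1 :: u.2])) /=; last first.
  exists (fun t : k.+1.-tuple gT => (thead t, [tuple of behead t])).
    by move=> [y t] _; rewrite theadE; congr (_, _); apply: val_inj.
  by move=> t _; rewrite [t in RHS]tuple_eta.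
apply: eq_bigl => -[y t]; rewrite !inE /= big_cons.
case: (y \in X) (all _ _) => [] [] //=.
by apply/eqP/eqP => [<-|->]; rewrite ?mulKg ?mulKVg.
Qed.

Lemma prod_rot1 X (s : seq gT) : {in X &, forall x y, commute x y} ->
  all (mem X) s -> \prod_(x <- seq.rot 1 s) x = \prod_(x <- s) x.
Proof.
move=> cX; case: s => //= x s /andP [Xx sX].
rewrite rot1_cons big_rcons big_cons; apply: esym.
rewrite big_seq; apply: (big_ind (commute x)) => [||y sy]; first exact: commute1.
  exact: commuteM.
by apply: cX => //; apply: (allP sX).
Qed.

(* Frobenius' congruence: rotation generates a group of order q acting on the
   q-tuples, whose fixed points are the constant tuples. *)
Lemma card_prod_tuples_mod q X z : prime q -> {in X &, forall x y, commute x y} ->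
  #|prod_tuples q X z| = #|[set x in X | x ^+ q == z]| %[mod q].
Proof.
case: q => // n pr_q cX; pose r := perm (@rot1_tuple_inj gT n.+1).
have rE t : r t = rot1_tuple t by rewrite permE.
have q_r : n.+1.-group <[r]>.
  rewrite /pgroup -orderE (pnat_dvd _ (pnat_id pr_q)) // order_dvdn.
  by apply/eqP/permP => t; rewrite permX perm1 (eq_iter rE) iter_rot1_tuple.
have r_acts : [acts <[r]>, on prod_tuples n.+1 X z | 'P].
  rewrite cycle_subG; apply/astabsP => t; rewrite /= apermE rE !inE /=.
  by rewrite (eq_all_r (mem_rot 1 t)); case tX: (all _ _); rewrite //= (prod_rot1 cX).
rewrite (pgroup_fix_mod q_r r_acts) afix_cycle; congr (_ %% _).
rewrite -(card_in_imset (f := @nseq_tuple n.+1 gT)); last by move=> x y _ _ /(congr1 val) [].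
apply: eq_card => t; rewrite [in LHS]inE; apply/andP/imsetP => [[]|[x]].
  move=> tX /afix1P; rewrite /= apermE rE => /eqP /rot1_tupleP [x tx]; exists x => //.
  by move: tX; rewrite tx !inE /= big_cons big_nseq iter_mulg_1 -expgS => /andP [/andP [->]].
rewrite inE => /andP [Xx /eqP xz] ->; split.
  rewrite inE /= Xx big_cons big_nseq iter_mulg_1 -expgS xz eqxx andbT.
  by apply/allP => y /nseqP [-> _].
by apply/afix1P; rewrite /= apermE rE; apply/eqP/rot1_tupleP; exists x.
Qed.

End ProductTuples.

Section Radical.
Variable gT : finGroupType.
Implicit Types (H : {group gT}) (X : {set gT}).

Lemma rad_group_set H X : group_set (rad H X).
Proof.
apply/group_setP; split=> [|x y]; first by rewrite inE group1 rcoset1 lcoset1 !eqxx.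
rewrite !inE => /and3P [Hx /eqP Xx /eqP xX] /and3P [Hy /eqP Xy /eqP yX].
by rewrite groupM // rcosetM Xx Xy lcosetM yX xX !eqxx.
Qed.

Canonical rad_group H X := group (rad_group_set H X).

Lemma rad_sub H X : rad H X \subset H.
Proof. by apply/subsetP => x; rewrite inE => /andP []. Qed.

Lemma rad_mem1 H X x : x \in X -> x^-1 \in rad H X -> 1 \in X.
Proof.
by move=> Xx; rewrite inE => /and3P [_ /eqP <- _]; rewrite -(mulgV x) mem_mulg ?set11.
Qed.

Lemma rad_set1 H : rad H [set 1] = 1.
Proof.
apply/trivgP/subsetP => x; rewrite inE => /and3P [_ /eqP E _].
have : x \in [set 1] :* x by rewrite mem_rcoset mulgV set11.
by rewrite E.
Qed.

Lemma radI (U : {group gT}) H X : U \subset H -> rad U X = U :&: rad H X.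
Proof.
move=> sUH; apply/setP => x; rewrite !inE.
by case Ux: (x \in U); rewrite //= (subsetP sUH x Ux).
Qed.

Lemma radE H X : abelian H -> X \subset H -> rad H X = [set h in H | X :* h == X].
Proof.
move=> cHH sXH; apply/setP => h; rewrite !inE; case Hh: (h \in H) => //=.
suff -> : h *: X = X :* h by rewrite andbb.
apply: centC; rewrite sub1set; apply: subsetP (centS sXH) _ _.
exact: subsetP cHH h Hh.
Qed.

End Radical.

Section Factorisations.
Variable gT : finGroupType.
Implicit Types (X Y : {set gT}) (z : gT).

Definition mul_count X Y z := #|[set u in setX X Y | u.1 * u.2 == z]|.

Lemma mul_countE X Y z : mul_count X Y z = #|[set x in X | x^-1 * z \in Y]|.
Proof.
rewrite /mul_count -(card_in_imset (f := fun x => (x, x^-1 * z))) => [|x1 x2 _ _ [] //].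
apply: eq_card => -[a b]; rewrite !inE /=; apply/andP/imsetP => [[] | [x]].
  by case/andP=> Xa Yb /eqP abz; exists a; rewrite ?inE -abz ?mulKg ?Xa ?Yb.
by rewrite inE => /andP [Xx Yxz] [-> ->]; rewrite Xx Yxz mulKVg eqxx.
Qed.

End Factorisations.

Lemma cycle_eq_expg (gT : finGroupType) (p : nat) (G : {group gT}) x y :
  p.-group G -> x \in G -> <[x]> = <[y]> ->
  exists m, [/\ 0 < m, coprime #|G| m & y = x ^+ m].
Proof.
move=> pG Gx xy; have [x1 | ntx] := eqVneq x 1.
  exists 1%N; rewrite coprimen1 expg1 x1; split=> //.
  by apply/eqP; rewrite -cycle_eq1 -xy x1 cycle1.
have /cycleP [m ym] : y \in <[x]> by rewrite xy cycle_id.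
have cxm : coprime #[x] m by rewrite -generator_coprime /generator -ym xy.
have ntX : <[x]> != 1 by rewrite cycle_eq1.
have [pr_p p_x _] := pgroup_pdiv (mem_p_elt pG Gx : p.-group <[x]>) ntX.
have cpm : coprime p m := coprime_dvdl p_x cxm.
exists m; split=> //; last by rewrite (card_pgroup pG) coprimeXl.
by rewrite lt0n; apply: contraTneq cpm => ->; rewrite prime_coprime ?dvdn0.
Qed.

Lemma cyclic_pgroup_gen_cycle (gT : finGroupType) (p : nat) (T : {set gT}) :
  p.-group <<T>> -> cyclic <<T>> -> T != set0 -> exists2 t, t \in T & <[t]> = <<T>>.
Proof.
move=> pT cT /set0Pn [t0 Tt0].
case: (arg_maxnP (fun t => logn p #[t]) Tt0) => t Tt max_t.
have sTT u : u \in T -> <[u]> \subset <<T>> by move=> Tu; rewrite cycle_subG mem_gen.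
exists t => //; apply/eqP; rewrite eqEsubset sTT // gen_subG.
apply/subsetP => u Tu; rewrite -cycle_subG -(cardSg_cyclic cT) ?sTT //.
have [pu pt] := (pgroupS (sTT u Tu) pT, pgroupS (sTT t Tt) pT).
by rewrite (card_pgroup pu) (card_pgroup pt); apply/dvdn_exp2l/max_t.
Qed.

Section SRing.
Variables (gT : finGroupType) (G : {group gT}) (S : {set {set gT}}).
Hypothesis sS : is_sring G S.
Implicit Types (X Y Z A B T : {set gT}) (x y z : gT).

Definition basic_const (f : gT -> nat) :=
  forall Z, Z \in S -> {in Z &, forall z1 z2, f z1 = f z2}.

Lemma sring_trivIset : trivIset S.
Proof. by case: sS => /and3P []. Qed.

Lemma sring_cover : cover S = G.
Proof. by case: sS => /and3P [/eqP]. Qed.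

Lemma sring_set1 : [set 1] \in S.
Proof. by case: sS. Qed.

Lemma sring_invs X : X \in S -> X^-1 \in S.
Proof. by case: sS => _ _ invS _; apply: invS. Qed.

Lemma sring_mul_const X Y : X \in S -> Y \in S -> basic_const (mul_count X Y).
Proof. by case: sS => _ _ _ mulS SX SY Z SZ; apply: mulS. Qed.

Lemma basic_subG X : X \in S -> X \subset G.
Proof. by move=> SX; rewrite -sring_cover bigcup_sup. Qed.

Lemma pblock_basic x : x \in G -> pblock S x \in S.
Proof. by move=> Gx; rewrite pblock_mem ?sring_cover. Qed.

Lemma mem_pblock_basic x : x \in G -> x \in pblock S x.
Proof. by move=> Gx; rewrite mem_pblock sring_cover. Qed.

Lemma pblock_basicE X x : X \in S -> x \in X -> pblock S x = X.
Proof. exact: def_pblock sring_trivIset. Qed.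

Lemma pblock_eq_basic X x : X \in S -> x \in G -> (pblock S x == X) = (x \in X).
Proof.
by move=> SX Gx; apply/eqP/idP => [<-|Xx]; [apply: mem_pblock_basic | apply: pblock_basicE].
Qed.

Lemma basic_set1 Z : Z \in S -> 1 \in Z -> Z = [set 1].
Proof.
by move=> SZ Z1; rewrite -(pblock_basicE SZ Z1) (pblock_basicE sring_set1 (set11 1)).
Qed.

Lemma asetP X :
  reflect (X \subset G /\ {in X, forall x, pblock S x \subset X}) (is_aset G S X).
Proof.
apply: (iffP andP) => -[sXG XS]; split=> //.
  move=> x Xx; have Gx := subsetP sXG x Xx.
  apply: (implyP (forall_inP XS _ (pblock_basic Gx))).
  by apply/set0Pn; exists x; rewrite inE mem_pblock_basic.
apply/forall_inP => Y SY; apply/implyP => /set0Pn [y /setIP [Yy Xy]].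
by rewrite -(pblock_basicE SY Yy) XS.
Qed.

Lemma aset_pblock X x : is_aset G S X -> x \in X -> pblock S x \subset X.
Proof. by case/asetP => _; apply. Qed.

Lemma aset_cover (F : {set {set gT}}) : F \subset S -> is_aset G S (cover F).
Proof.
move=> sFS; apply/asetP; split.
  by apply/bigcupsP => X FX; rewrite basic_subG ?(subsetP sFS).
move=> x /bigcupP [X FX Xx]; rewrite (pblock_basicE (subsetP sFS X FX) Xx).
exact: bigcup_sup.
Qed.

Lemma asetG : is_aset G S G.
Proof. by move: (aset_cover (subxx S)); rewrite sring_cover. Qed.

Lemma aset_basic X : X \in S -> is_aset G S X.
Proof. by move=> SX; rewrite -[X]cover1; apply: aset_cover; rewrite sub1set. Qed.

Lemma asetI A B : is_aset G S A -> is_aset G S B -> is_aset G S (A :&: B).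
Proof.
move=> /asetP [sAG AS] /asetP [_ BS]; apply/asetP; split; first by rewrite subIset ?sAG.
by move=> x /setIP [Ax Bx]; rewrite subsetI AS ?BS.
Qed.

Lemma asetU A B : is_aset G S A -> is_aset G S B -> is_aset G S (A :|: B).
Proof.
move=> /asetP [sAG AS] /asetP [sBG BS]; apply/asetP; split; first by rewrite subUset sAG.
by move=> x /setUP [/AS | /BS] sXA; rewrite subsetU ?sXA ?orbT.
Qed.

Lemma asetM A B : is_aset G S A -> is_aset G S B -> is_aset G S (A * B).
Proof.
move=> aA aB; have [[sAG _] [sBG _]] := (asetP _ aA, asetP _ aB).
apply/asetP; split=> [|_ /mulsgP [a b Aa Bb ->]]; first exact: mul_subG.
have [Ga Gb] := (subsetP sAG a Aa, subsetP sBG b Bb); have Gab := groupM Ga Gb.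
apply/subsetP => y XYy; have := sring_mul_const (pblock_basic Ga) (pblock_basic Gb).
move/(_ _ (pblock_basic Gab) _ _ (mem_pblock_basic Gab) XYy) => countE.
have /card_gt0P [[u v]] : 0 < mul_count (pblock S a) (pblock S b) y.
  by rewrite -countE; apply/card_gt0P; exists (a, b); rewrite !inE !mem_pblock_basic ?eqxx.
rewrite !inE /= => /andP [/andP [Xu Xv] /eqP <-].
by rewrite mem_mulg ?(subsetP (aset_pblock aA Aa)) ?(subsetP (aset_pblock aB Bb)).
Qed.

Lemma aset_gen T : is_aset G S T -> is_aset G S <<T>>.
Proof.
move=> aT; have [n ->] := gen_expgs T.
have a1T : is_aset G S (1 |: T) by rewrite asetU // aset_basic // sring_set1.
elim: n => [|n IHn]; first by rewrite expg0 set1gE aset_basic // sring_set1.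
by rewrite expgS asetM.
Qed.

Lemma sum_basic_const f X z : basic_const f -> X \subset G -> z \in G ->
  \sum_(y in X) f (y^-1 * z)%g = \sum_(W in S) mul_count X W z * f (repr W).
Proof.
move=> fS sXG Gz; have Gyz y : y \in X -> y^-1 * z \in G.
  by move=> Xy; rewrite groupM ?groupV ?(subsetP sXG y Xy).
rewrite (partition_big (fun y => pblock S (y^-1 * z)) (fun W => W \in S)); last first.
  by move=> y /Gyz; apply: pblock_basic.
apply: eq_bigr => W SW; rewrite mul_countE -sum_nat_const.
apply: eq_big => [y | y].
  by rewrite inE; case Xy: (y \in X); rewrite //= pblock_eq_basic ?Gyz.
case/andP=> Xy /eqP yzW; have Wyz : y^-1 * z \in W by rewrite -yzW mem_pblock_basic ?Gyz.
exact: fS SW _ _ Wyz (mem_repr _ Wyz).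
Qed.

Lemma basic_const_conv f X : X \in S -> basic_const f ->
  basic_const (fun z => \sum_(y in X) f (y^-1 * z)%g).
Proof.
move=> SX fS Z SZ z1 z2 Zz1 Zz2; have sZG := basic_subG SZ.
rewrite !sum_basic_const ?basic_subG ?(subsetP sZG) //; apply: eq_bigr => W SW.
by rewrite (sring_mul_const SX SW SZ Zz1 Zz2).
Qed.

Lemma basic_const_prod_tuples k X : X \in S ->
  basic_const (fun z => #|prod_tuples k X z|).
Proof.
move=> SX; elim: k => [|k IHk] Z SZ z1 z2 Zz1 Zz2; last first.
  by rewrite !card_prod_tuplesS; apply: (basic_const_conv SX IHk SZ Zz1 Zz2).
rewrite !card_prod_tuples0; case: (boolP (1 \in Z)) => [/(basic_set1 SZ) Z1 | Z'1].
  by move: Zz1 Zz2; rewrite Z1 => /set1P -> /set1P ->.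
have neq1 z : z \in Z -> (z == 1) = false by move=> Zz; apply: contraNF Z'1 => /eqP <-.
by rewrite !neq1.
Qed.

Hypothesis cGG : abelian G.

Lemma mem_rad_count X h : X \subset G -> h \in G ->
  (h \in rad G X) = (mul_count X^-1 X h == #|X|).
Proof.
move=> sXG Gh; rewrite radE // inE Gh /=.
have -> : mul_count X^-1 X h = #|[set x in X | x * h \in X]|.
  by rewrite mul_countE -[RHS]card_invg; apply: eq_card => a; rewrite !inE.
rewrite eqEcard card_rcoset leqnn andbT.
apply/idP/eqP => [sXhX | cardX].
  apply: eq_card => x; rewrite inE; case Xx: (x \in X) => //=.
  by apply: (subsetP sXhX); rewrite mem_rcoset mulgK.
have XhX : [set x in X | x * h \in X] = X.
  apply/eqP; rewrite eqEcard cardX leqnn andbT.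
  by apply/subsetP => x; rewrite inE => /andP [].
by apply/subsetP => y; rewrite mem_rcoset -{1}XhX inE mulgKV => /andP [].
Qed.

Lemma rad_aset X : X \in S -> is_aset G S (rad G X).
Proof.
move=> SX; have sXG := basic_subG SX; apply/asetP; split=> [|h Rh]; first exact: rad_sub.
have Gh := subsetP (rad_sub G X) h Rh; apply/subsetP => y Yy.
have Gy := subsetP (basic_subG (pblock_basic Gh)) y Yy.
have countE := sring_mul_const (sring_invs SX) SX (pblock_basic Gh) (mem_pblock_basic Gh) Yy.
by rewrite mem_rad_count // -countE -mem_rad_count.
Qed.

Lemma asubgroup_rad X : X \in S -> is_asubgroup G S (rad_group G X).
Proof. by move=> SX; rewrite /is_asubgroup rad_sub rad_aset. Qed.

(* Schur's theorem on multipliers, for a prime multiplier q: the number of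
   q-th roots in [pblock S t] is constant mod q on [pblock S (t ^+ q)], and it
   is 1 at [t ^+ q]. *)
Lemma aset_expg_prime q T : prime q -> coprime #|G| q -> is_aset G S T ->
  is_aset G S [set x ^+ q | x in T].
Proof.
move=> pr_q cGq /asetP [sTG TS]; apply/asetP; split.
  by apply/subsetP => _ /imsetP [x Tx ->]; rewrite groupX ?(subsetP sTG).
move=> _ /imsetP [t Tt ->]; apply/subsetP => y Yy.
have Gt := subsetP sTG t Tt; have Gtq : t ^+ q \in G by rewrite groupX.
set X := pblock S t; have sXG : X \subset G := basic_subG (pblock_basic Gt).
have cX : {in X &, forall x y, commute x y}.
  by move=> x1 x2 /(subsetP sXG) Gx1 /(subsetP sXG) Gx2; apply: (centsP cGG).
have roots_tq : #|[set x in X | x ^+ q == t ^+ q]| = 1%N.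
  apply/eqP/cards1P; exists t; apply/setP => x; rewrite !inE.
  apply/andP/eqP => [[Xx /eqP]|->]; last by rewrite mem_pblock_basic.
  exact: (can_in_inj (expgK cGq)) (subsetP sXG x Xx) Gt.
have roots_y : (#|[set x in X | x ^+ q == y]| = 1 %[mod q])%N.
  rewrite -roots_tq -!card_prod_tuples_mod //; congr (_ %% _).
  exact: basic_const_prod_tuples (pblock_basic Gt) _ (pblock_basic Gtq) _ _ Yy
    (mem_pblock_basic Gtq).
have /card_gt0P [x] : 0 < #|[set x in X | x ^+ q == y]|.
  rewrite lt0n; apply/eqP => roots0.
  by move: roots_y; rewrite roots0 mod0n modn_small ?prime_gt1.
rewrite inE => /andP [Xx /eqP <-]; apply/imsetP; exists x => //.
exact: subsetP (TS t Tt) x Xx.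
Qed.

Lemma aset_expg m T : 0 < m -> coprime #|G| m -> is_aset G S T ->
  is_aset G S [set x ^+ m | x in T].
Proof.
elim/ltn_ind: m T => m IHm T m_gt0 cGm aT.
have [m_le1 | m_gt1] := leqP m 1.
  have -> : m = 1%N by apply/eqP; rewrite eqn_leq m_le1.
  by rewrite (eq_imset _ (fun x : gT => expg1 x)) imset_id.
have pr_q := pdiv_prime m_gt1; have dv_q := pdiv_dvd m.
have -> : [set x ^+ m | x in T] =
          [set y ^+ pdiv m | y in [set x ^+ (m %/ pdiv m) | x in T]].
  by rewrite -imset_comp; apply: eq_imset => x /=; rewrite -expgM (divnK dv_q).
apply: (aset_expg_prime pr_q (coprime_dvdr dv_q cGm)).
apply: IHm aT.
- by rewrite ltn_Pdiv ?prime_gt1.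
- by rewrite divn_gt0 ?pdiv_gt0 // dvdn_leq.
- exact: coprime_dvdr (dvdn_div dv_q) cGm.
Qed.

Lemma rad_expg m X : coprime #|G| m -> X \subset G ->
  rad G X \subset rad G [set x ^+ m | x in X].
Proof.
move=> cGm sXG; have sXmG : [set x ^+ m | x in X] \subset G.
  by apply/subsetP => _ /imsetP [x Xx ->]; rewrite groupX ?(subsetP sXG).
apply/subsetP => k Rk; have Gk := subsetP (rad_sub G X) k Rk.
set k0 := k ^+ expg_invn G m.
have Rk0 : k0 \in rad G X by rewrite groupX.
have Gk0 := subsetP (rad_sub G X) k0 Rk0.
have k0m : k0 ^+ m = k by rewrite /k0 expgAC expgK.
move: Rk0; rewrite !radE // !inE Gk /= => /andP [_ /eqP Xk0].
rewrite eqEcard card_rcoset leqnn andbT.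
apply/subsetP => _ /rcosetP [_ /imsetP [x Xx ->] ->].
rewrite -k0m -expgMn; last exact: (centsP cGG) x (subsetP sXG x Xx) k0 Gk0.
by apply/imsetP; exists (x * k0); rewrite // -Xk0 mem_rcoset mulgK.
Qed.

Variable p : nat.
Hypothesis pG : p.-group G.

Lemma pblock_cycle x y : x \in G -> y \in G -> <[x]> = <[y]> ->
  exists m, coprime #|G| m /\ pblock S y = [set z ^+ m | z in pblock S x].
Proof.
have sub_pow u v : u \in G -> <[u]> = <[v]> ->
    exists m, coprime #|G| m /\ pblock S v \subset [set z ^+ m | z in pblock S u].
  move=> Gu uv; have [m [m_gt0 cGm ->]] := cycle_eq_expg pG Gu uv.
  have aX := aset_expg m_gt0 cGm (aset_basic (pblock_basic Gu)).
  exists m; split=> //; apply: aset_pblock aX _.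
  by apply/imsetP; exists u; rewrite ?mem_pblock_basic.
have card_pow m u : coprime #|G| m -> u \in G ->
    #|[set z ^+ m | z in pblock S u]| = #|pblock S u|.
  move=> cGm Gu; have sXG := subsetP (basic_subG (pblock_basic Gu)).
  by apply: card_in_imset => z1 z2 /sXG Gz1 /sXG Gz2; apply: (can_in_inj (expgK cGm)).
move=> Gx Gy xy; have [m [cGm sYX]] := sub_pow x y Gx xy.
have [n [cGn sXY]] := sub_pow y x Gy (esym xy).
exists m; split=> //; apply/eqP; rewrite eqEcard sYX card_pow //.
by rewrite -(card_pow n y) ?subset_leq_card.
Qed.

Lemma rad_pblock_cycle x y : x \in G -> y \in G -> <[x]> = <[y]> ->
  rad G (pblock S x) = rad G (pblock S y).
Proof.
suff sub_rad u v : u \in G -> v \in G -> <[u]> = <[v]> ->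
    rad G (pblock S u) \subset rad G (pblock S v).
  by move=> Gx Gy xy; apply/eqP; rewrite eqEsubset !sub_rad.
move=> Gu Gv uv; have [m [cGm ->]] := pblock_cycle Gu Gv uv.
exact: rad_expg (basic_subG (pblock_basic Gu)).
Qed.

Lemma sring_radE x : generator G x -> sring_rad G S = rad G (pblock S x).
Proof.
move=> genx; have Gx : x \in G by rewrite (eqP genx) cycle_id.
rewrite /sring_rad; case: pickP => [g /andP [Gg /eqP geng] | /(_ x)]; last by rewrite Gx genx.
by apply: rad_pblock_cycle; rewrite // -geng -(eqP genx).
Qed.

Lemma pblock_restr (U : {set gT}) x : is_aset G S U -> x \in U ->
  pblock (restr_sring S U) x = pblock S x.
Proof.
move=> aU Ux; have Gx : x \in G by case/asetP: aU => /subsetP->.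
apply: def_pblock; last exact: mem_pblock_basic.
  by apply: trivIsetS sring_trivIset; apply/subsetP => X; rewrite inE => /andP [].
by rewrite inE pblock_basic ?aset_pblock.
Qed.

Lemma sring_rad_restr (U : {group gT}) u : is_asubgroup G S U -> generator U u ->
  sring_rad U (restr_sring S U) = U :&: rad G (pblock S u).
Proof.
case/andP=> sUG aU genu; have Uu : u \in U by rewrite (eqP genu) cycle_id.
rewrite /sring_rad; case: pickP => [g /andP [Ug /eqP geng] | /(_ u)]; last by rewrite Uu genu.
have [Gg Gu] := (subsetP sUG g Ug, subsetP sUG u Uu).
by rewrite pblock_restr // (radI _ sUG) (rad_pblock_cycle Gg Gu) // -geng -(eqP genu).
Qed.

End SRing.

Section WreathDecomposition.
Variables (gT : finGroupType) (p : nat) (G : {group gT}) (S : {set {set gT}}).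

Definition min_asubgroup : {group gT} :=
  (\bigcap_(H : {group gT} | is_asubgroup G S H && (H :!=: 1)) H)%G.

Definition unstable_basic := [set X in S | ~~ (min_asubgroup \subset rad G X)].

Definition unstable_span : {group gT} := <<cover unstable_basic>>%G.

Hypotheses (pG : p.-group G) (cycG : cyclic G) (sS : is_sring G S) (ntG : G :!=: 1).

Local Notation L := min_asubgroup.
Local Notation U := unstable_span.

Let cGG : abelian G := cyclic_abelian cycG.

Lemma min_asubgroup_sub (H : {group gT}) :
  is_asubgroup G S H -> H :!=: 1 -> L \subset H.
Proof. by move=> aH ntH; apply: bigcap_inf; rewrite aH ntH. Qed.

Lemma asubgroup_min : is_asubgroup G S L.
Proof.
have sLG : L \subset G by rewrite min_asubgroup_sub // /is_asubgroup subxx asetG.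
rewrite /is_asubgroup sLG; apply/(asetP sS); split=> // x Lx.
apply/bigcapsP => H /andP [aH ntH]; case/andP: (aH) => _ /(aset_pblock sS); apply.
by move: Lx; rewrite /= => /bigcapP; apply; rewrite aH ntH.
Qed.

Lemma min_asubgroup_neq1 : L :!=: 1.
Proof.
have [pr_p p_G _] := pgroup_pdiv pG ntG; have [w Gw ow] := Cauchy pr_p p_G.
apply/trivgPn; exists w; last by rewrite -order_gt1 ow prime_gt1.
apply/bigcapP => H /andP [/andP [sHG _] ntH].
have [_ p_H _] := pgroup_pdiv (pgroupS sHG pG) ntH.
by rewrite -cycle_subG -(cardSg_cyclic cycG) ?cycle_subG // -orderE ow.
Qed.

Lemma mem_unstable_basic X :
  (X \in unstable_basic) = (X \in S) && ~~ (L \subset rad G X).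
Proof. by rewrite inE. Qed.

Let sLG : L \subset G. Proof. by case/andP: asubgroup_min. Qed.

Let sFS : unstable_basic \subset S.
Proof. by apply/subsetP => X; rewrite mem_unstable_basic => /andP []. Qed.

(* If L stabilised the basic set of [l \in L], that set would contain
   [l * l^-1 = 1], hence be [set 1], whose radical is trivial. *)
Lemma min_asubgroup_sub_cover : L \subset cover unstable_basic.
Proof.
apply/subsetP => l Ll; have Gl := subsetP sLG l Ll.
apply/bigcupP; exists (pblock S l); last by apply: (mem_pblock_basic sS).
rewrite mem_unstable_basic (pblock_basic sS Gl) /=; apply/negP => sLR.
have X1 : pblock S l = [set 1].
  apply: (basic_set1 sS (pblock_basic sS Gl)).
  exact: rad_mem1 (mem_pblock_basic sS Gl) (subsetP sLR _ (groupVr Ll)).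
by move: sLR; rewrite X1 rad_set1 subG1 (negbTE min_asubgroup_neq1).
Qed.

Lemma asubgroup_unstable_span : is_asubgroup G S U.
Proof.
have aF := aset_cover sS sFS; have /(asetP sS) [sFG _] := aF.
by rewrite /is_asubgroup gen_subG sFG aset_gen.
Qed.

Let sUG : U \subset G. Proof. by case/andP: asubgroup_unstable_span. Qed.

Lemma min_asubgroup_sub_span : L \subset U.
Proof. exact: subset_trans min_asubgroup_sub_cover (sub_gen _). Qed.

Lemma wreath_unstable_span : is_wreath G S U L.
Proof.
rewrite /is_wreath -sub_abelian_normal // sLG /=.
apply/forall_inP => X SX; apply/implyP; apply: contraR => nLX.
apply/subsetP => x Xx; apply: mem_gen; apply/bigcupP.
by exists X; rewrite // mem_unstable_basic SX.
Qed.

Lemma unstable_span_generator :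
  exists2 t, <[t]> = U & ~~ (L \subset rad G (pblock S t)).
Proof.
have neF : cover unstable_basic != set0.
  by apply/set0Pn; exists 1; apply: subsetP min_asubgroup_sub_cover _ _.
have [t Ft tU] := cyclic_pgroup_gen_cycle (pgroupS sUG pG) (cyclicS sUG cycG) neF.
exists t => //; case/bigcupP: Ft => X; rewrite mem_unstable_basic => /andP [SX nLX] Xt.
by rewrite (pblock_basicE sS SX Xt).
Qed.

Lemma unstable_span_proper : sring_rad G S != 1 -> U :!=: G.
Proof.
move=> ntR; have [t tU nLt] := unstable_span_generator; apply: contra nLt => /eqP UG.
have Gt : t \in G by rewrite -UG -tU cycle_id.
have genG : generator G t by rewrite /generator -UG tU.
rewrite (sring_radE sS cGG pG genG) in ntR.
exact: min_asubgroup_sub (asubgroup_rad sS cGG (pblock_basic sS Gt)) ntR.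
Qed.

Lemma sring_rad_unstable_span : sring_rad U (restr_sring S U) = 1.
Proof.
have [t tU nLt] := unstable_span_generator.
have genU : generator U t by rewrite /generator tU.
have Gt : t \in G by rewrite (subsetP sUG) // -tU cycle_id.
rewrite (sring_rad_restr sS cGG pG asubgroup_unstable_span genU).
apply/eqP; apply: contraNT nLt => ntI.
have aI : is_asubgroup G S (U :&: rad_group G (pblock S t))%G.
  case/andP: asubgroup_unstable_span => _ aU.
  by rewrite /is_asubgroup subIset ?sUG // asetI // rad_aset // (pblock_basic sS Gt).
by have := min_asubgroup_sub aI ntI; rewrite subsetI => /andP [].
Qed.

End WreathDecomposition.

Theorem lemma5p2 (gT : finGroupType) (p : nat) (G : {group gT})
  (S : {set {set gT}}) :
  prime p -> p.-group G -> cyclic G -> is_sring G S ->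
  sring_rad G S != 1 ->
  exists U L : {group gT},
    [/\ is_asection G S U L, is_proper_wreath G S U L &
        sring_rad U (restr_sring S U) = 1].
Proof.
move=> _ pG cycG sS ntR.
have ntG : G :!=: 1.
  by apply: contraNneq ntR => G1; apply/eqP/trivgP; rewrite -G1 rad_sub.
have [sUG _] := andP (asubgroup_unstable_span sS).
exists (unstable_span G S), (min_asubgroup G S); split.
- rewrite /is_asection asubgroup_unstable_span // asubgroup_min //=.
  rewrite -sub_abelian_normal ?(min_asubgroup_sub_span pG) //.
  exact: abelianS sUG (cyclic_abelian cycG).
- rewrite /is_proper_wreath wreath_unstable_span // (min_asubgroup_neq1 S pG) //.
  exact: unstable_span_proper pG cycG sS ntG ntR.
- exact: sring_rad_unstable_span pG cycG sS ntG.
Qed.
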